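(* Let $A$ be a Huber ring and $A_1\subset A_2$ rings of integral elements of $A$, and consider the homomorphism of Huber pairs $(A,A_1)\to(A,A_2)$ given by the identity of $A$. Then the image of the induced map $\phi\colon\mathrm{Spa}(A,A_2)\to\mathrm{Spa}(A,A_1)$ is closed under generalized horizontal specialization in $\mathrm{Spa}(A,A_1)$, i.e. every point of $\mathrm{Spa}(A,A_1)$ which is a generalized horizontal specialization of a point in the image lies in the image.
   Context: Points of $\mathrm{Spa}(A,A^+)$ are continuous valuations on $A$. For a valuation $v$ on $A$ with value group $\Gamma_v$, $c\Gamma_v$ is the convex subgroup generated by $\{v(a):v(a)\ge1\}$; for convex $H\supseteq c\Gamma_v$, $v|_H(a)=v(a)$ if $v(a)\in H$ and $0$ otherwise. A valuation $w$ is a generalized horizontal specialization of $v$ if either $w=v|_H$ for such an $H$ (horizontal specialization), or $c\Gamma_v$ is trivial and $w$ is a trivial valuation with $\mathrm{supp}(v|_{c\Gamma_v})\subset\mathrm{supp}(w)$. *)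

From HB Require Import structures.
From mathcomp Require Import all_boot all_order all_algebra.
From Stdlib Require Import ClassicalEpsilon.
Set Implicit Arguments. Unset Strict Implicit. Unset Printing Implicit Defensive.
Import GRing.Theory.
Local Open Scope ring_scope.

Record ordGroup := OrdGroup {
  og :> Type;
  ogmul : og -> og -> og;
  og1 : og;
  oginv : og -> og;
  ogle : og -> og -> Prop;
  ogmulA : forall x y z, ogmul x (ogmul y z) = ogmul (ogmul x y) z;
  ogmulC : forall x y, ogmul x y = ogmul y x;
  ogmul1 : forall x, ogmul og1 x = x;
  ogmulV : forall x, ogmul (oginv x) x = og1;
  ogle_refl : forall x, ogle x x;
  ogle_anti : forall x y, ogle x y -> ogle y x -> x = y;
  ogle_trans : forall x y z, ogle x y -> ogle y z -> ogle x z;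
  ogle_total : forall x y, ogle x y \/ ogle y x;
  ogle_mul : forall x y z, ogle x y -> ogle (ogmul x z) (ogmul y z)
}.

(* Gamma u {0}: [None] is the element 0, [Some x] is x. *)
Definition ole (G : ordGroup) (x y : option G) : Prop :=
  match x, y with
  | None, _ => True
  | Some _, None => False
  | Some a, Some b => ogle a b
  end.
Definition olt (G : ordGroup) (x y : option G) : Prop := ole x y /\ x <> y.
Definition omul (G : ordGroup) (x y : option G) : option G :=
  match x, y with
  | Some a, Some b => Some (ogmul a b)
  | _, _ => None
  end.

(* Huber rings: a ring A with a ring of definition A0 and a finitely   *)
(* generated ideal I = (gens) of A0; the topology of A is the one for  *)
(* which the I^n form a fundamental system of neighbourhoods of 0.     *)
Section Huber.
Variable A : comNzRingType.

Definition subring (P : A -> Prop) : Prop :=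
  [/\ P 1, (forall x y, P x -> P y -> P (x - y)) & (forall x y, P x -> P y -> P (x * y))].

Inductive monom (gens : seq A) : nat -> A -> Prop :=
| monom0 : monom gens 0 1
| monomS n a x : a \in gens -> monom gens n x -> monom gens n.+1 (a * x).

(* x belongs to I^n, I the ideal of A0 generated by gens *)
Inductive ipow (A0 : A -> Prop) (gens : seq A) (n : nat) : A -> Prop :=
| ipow0 : ipow A0 gens n 0
| ipowD x y : ipow A0 gens n x -> ipow A0 gens n y -> ipow A0 gens n (x + y)
| ipowM r m : A0 r -> monom gens n m -> ipow A0 gens n (r * m).

Record huber := Huber {
  hA0 : A -> Prop;
  hgens : seq A;
  hA0_subring : subring hA0;
  hgens_A0 : forall g, g \in hgens -> hA0 g;
  (* continuity of multiplication: for all a, n there is m with a I^m ⊆ I^n *)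
  hmul_cont : forall a n, exists m, forall y, ipow hA0 hgens m y -> ipow hA0 hgens n (a * y)
}.

Variable H : huber.

Definition hopen (U : A -> Prop) : Prop :=
  forall x, U x -> exists n, forall y, ipow (hA0 H) (hgens H) n y -> U (x + y).

Definition nbhd0 (U : A -> Prop) : Prop :=
  exists V, [/\ hopen V, V 0 & forall x, V x -> U x].

Definition bounded (S : A -> Prop) : Prop :=
  forall U, nbhd0 U -> exists V, nbhd0 V /\ forall x s, V x -> S s -> U (x * s).

Definition power_bounded (a : A) : Prop := bounded (fun x => exists n, x = a ^+ n).

Definition integral_over (P : A -> Prop) (a : A) : Prop :=
  exists p : {poly A}, [/\ p \is monic, (forall i, P p`_i) & p.[a] = 0].

Definition ring_of_integral_elements (P : A -> Prop) : Prop :=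
  [/\ subring P, hopen P, (forall a, integral_over P a -> P a)
    & (forall a, P a -> power_bounded a)].

End Huber.

Record rawval (A : Type) := RawVal {
  vgrp : ordGroup;
  vfun :> A -> option vgrp
}.

(* pull back along a map (for a ring hom f : B -> A this is Spa(f)) *)
Definition comap (A B : Type) (f : B -> A) (v : rawval A) : rawval B :=
  @RawVal B (vgrp v) (fun b => vfun v (f b)).

Unset Implicit Arguments.
Section Valuations.
Variable A : comNzRingType.

Definition is_valuation (v : rawval A) : Prop :=
  [/\ v 0 = None, v 1 = Some (og1 (vgrp v)),
      (forall a b, v (a * b) = omul (v a) (v b))
    & (forall a b, ole (v (a + b)) (v a) \/ ole (v (a + b)) (v b))].

Definition vequiv (v w : rawval A) : Prop :=
  forall a b, ole (v a) (v b) <-> ole (w a) (w b).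

Definition value_group (v : rawval A) (g : vgrp v) : Prop :=
  exists a b x y, [/\ v a = Some x, v b = Some y & g = ogmul x (oginv y)].

Definition convex_subgroup (v : rawval A) (Hs : vgrp v -> Prop) : Prop :=
  [/\ (forall g, Hs g -> value_group v g),
      Hs (og1 (vgrp v)),
      (forall x y, Hs x -> Hs y -> Hs (ogmul x y)),
      (forall x, Hs x -> Hs (oginv x))
    & (forall x y z, Hs x -> Hs z -> value_group v y -> ogle x y -> ogle y z -> Hs y)].

Definition cGamma (v : rawval A) (g : vgrp v) : Prop :=
  forall Hs, convex_subgroup v Hs ->
    (forall a x, v a = Some x -> ogle (og1 (vgrp v)) x -> Hs x) -> Hs g.

Definition restr (v : rawval A) (Hs : vgrp v -> Prop) : rawval A :=
  @RawVal A (vgrp v) (fun a =>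
    match vfun v a with
    | Some x => if excluded_middle_informative (Hs x) then Some x else None
    | None => None
    end).

Definition supp (v : rawval A) (a : A) : Prop := v a = None.

Definition trivial_val (v : rawval A) : Prop :=
  forall a, v a = None \/ v a = Some (og1 (vgrp v)).

Definition horizontal_specialization (w v : rawval A) : Prop :=
  exists Hs, [/\ convex_subgroup v Hs, (forall g, cGamma v g -> Hs g)
               & vequiv w (restr v Hs)].

Definition gen_horizontal_specialization (w v : rawval A) : Prop :=
  horizontal_specialization w v \/
  [/\ (forall g, cGamma v g -> g = og1 (vgrp v)), trivial_val w
    & (forall a, supp (restr v (cGamma v)) a -> supp w a)].

Definition continuous_val (H : huber A) (v : rawval A) : Prop :=
  forall g, value_group v g -> hopen H (fun a => olt (v a) (Some g)).

Definition in_Spa (H : huber A) (P : A -> Prop) (v : rawval A) : Prop :=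
  [/\ is_valuation v, continuous_val H v & forall a, P a -> ole (v a) (Some (og1 (vgrp v)))].

End Valuations.
Arguments is_valuation {A} v.
Arguments vequiv {A} v w.
Arguments value_group {A} v g.
Arguments convex_subgroup {A} v Hs.
Arguments cGamma {A} v g.
Arguments restr {A} v Hs.
Arguments supp {A} v a.
Arguments trivial_val {A} v.
Arguments horizontal_specialization {A} w v.
Arguments gen_horizontal_specialization {A} w v.
Arguments continuous_val {A} H v.
Arguments in_Spa {A} H P v.

From mathcomp Require Import all_boot all_order all_algebra.
From Stdlib Require Import ClassicalEpsilon.

Set Implicit Arguments.
Unset Strict Implicit.

Local Open Scope ring_scope.

(* Since the map Spa(A, A2) -> Spa(A, A1) is induced by the identity of A, a
   point of Spa(A, A1) is in its image as soon as it is bounded by 1 on A2;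
   conversely every point of the image is. Boundedness by 1 on A2 is
   preserved by equivalence of valuations, by passing to v|_H (which can only
   lower values, to 0) and holds for every trivial valuation; hence it passes
   from v to any generalized horizontal specialization w of v. *)

Lemma ole_trans (G : ordGroup) (x y z : option G) :
  ole x y -> ole y z -> ole x z.
Proof.
case: x => [a|] //; case: y => [b|] //; case: z => [c|] //=.
exact: ogle_trans.
Qed.

Section BoundedByOne.
Context {A : comNzRingType}.
Implicit Types (v w : rawval A) (P : A -> Prop).

Definition le1_on P v : Prop := forall a, P a -> ole (v a) (Some (og1 (vgrp v))).

Lemma vequiv_comap_id v : vequiv v (comap id v).
Proof. by []. Qed.

Lemma vequiv_le1_on P v w :
  is_valuation v -> is_valuation w -> vequiv v w -> le1_on P w -> le1_on P v.
Proof.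
move=> [_ v1 _ _] [_ w1 _ _] vw le1w a Pa.
by rewrite -v1; apply/vw; rewrite w1; apply: le1w.
Qed.

Lemma restr_le v Hs a : ole (restr v Hs a) (v a).
Proof.
rewrite /restr /=; case: (vfun v a) => [x|] //.
by case: excluded_middle_informative => _ //=; apply: ogle_refl.
Qed.

Lemma restr_val1 v Hs :
  is_valuation v -> Hs (og1 (vgrp v)) -> restr v Hs 1 = Some (og1 (vgrp v)).
Proof.
move=> [_ v1 _ _] Hs1; rewrite /restr /= v1.
by case: excluded_middle_informative.
Qed.

Lemma horizontal_specialization_le1_on P v w :
  is_valuation v -> is_valuation w -> horizontal_specialization w v ->
  le1_on P v -> le1_on P w.
Proof.
move=> vv vw [Hs [[_ Hs1 _ _ _] _ w_restr]] le1v.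
move=> a Pa; case: vw => _ w1 _ _; rewrite -w1; apply/w_restr.
rewrite restr_val1 //; apply: ole_trans (restr_le Hs a) _.
exact: le1v.
Qed.

Lemma trivial_val_le1_on P w : trivial_val w -> le1_on P w.
Proof. by move=> triv a _; case: (triv a) => ->; last apply: ogle_refl. Qed.

Lemma gen_horizontal_specialization_le1_on P v w :
  is_valuation v -> is_valuation w -> gen_horizontal_specialization w v ->
  le1_on P v -> le1_on P w.
Proof.
move=> vv vw [hs|[_ triv _]]; last by move=> _; apply: trivial_val_le1_on.
exact: horizontal_specialization_le1_on.
Qed.

Lemma in_Spa_le1_on (H : huber A) P u : in_Spa H P u -> le1_on P u.
Proof. by case. Qed.

Lemma in_Spa_change_ring (H : huber A) P1 P2 w :
  in_Spa H P1 w -> le1_on P2 w -> in_Spa H P2 w.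
Proof. by case. Qed.

End BoundedByOne.

Theorem lemma3p7 (A : comNzRingType) (H : huber A) (A1 A2 : A -> Prop)
  (hA1 : ring_of_integral_elements H A1) (hA2 : ring_of_integral_elements H A2)
  (h12 : forall a, A1 a -> A2 a)
  (v w : rawval A)
  (hv : in_Spa H A1 v)
  (hv_im : exists u, in_Spa H A2 u /\ vequiv v (comap id u))
  (hw : in_Spa H A1 w)
  (hwv : gen_horizontal_specialization w v) :
  exists u, in_Spa H A2 u /\ vequiv w (comap id u).
Proof.
have [[vv _ _] [vw _ _]] := (hv, hw).
have [u [uA2 v_u]] := hv_im.
have le1v : le1_on A2 v.
  by apply: vequiv_le1_on vv _ v_u (in_Spa_le1_on uA2); case: uA2.
exists w; split; last exact: vequiv_comap_id.
apply: in_Spa_change_ring hw _.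
exact: gen_horizontal_specialization_le1_on vv vw hwv le1v.
Qed.
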